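(* Under the setting below, suppose that for some $\tau_c\in(0,\bar\tau)$ the equation $\Delta(\lambda,\tau_c):=\lambda+A(\tau_c)-B(\tau_c)e^{-\lambda\tau_c}=0$ has a pair of purely imaginary roots $\pm i\omega(\tau_c)$ with $\omega(\tau_c)>0$. Then $\pm i\omega(\tau_c)$ are simple roots, so there is a $C^1$ branch of roots $\lambda(\tau)$ near $\tau_c$ with $\lambda(\tau_c)=i\omega(\tau_c)$, and $$\mathrm{sign}\left\{\frac{d\,\mathrm{Re}\,\lambda}{d\tau}\Big|_{\tau=\tau_c}\right\}=\mathrm{sign}\Big\{-B^3-B^2B'\tau_c+B\,(A^2+A'+AA'\tau_c)-B'A\Big\},$$ where $A=A(\tau_c)$, $B=B(\tau_c)$, $A'=A'(\tau_c)$, $B'=B'(\tau_c)$.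
   Context: Let $\delta>0$ and $\beta:[0,+\infty)\to(0,+\infty)$ twice continuously differentiable, strictly decreasing, with $\beta'(s)<0$ for $s>0$, $\lim_{S\to+\infty}\beta(S)=0$, and $\delta<\beta(0)$. Let $\bar\tau:=\frac1\delta\ln\!\big(\frac{2\beta(0)}{\delta+\beta(0)}\big)$, $\beta^{-1}$ the inverse of $\beta$ on $(0,\beta(0)]$, and for $\tau\in[0,\bar\tau)$: $S^*(\tau)=\beta^{-1}\!\big(\frac{\delta}{2e^{-\delta\tau}-1}\big)$, $N^*(\tau)=(2e^{-\delta\tau}-1)e^{\delta\tau}S^*(\tau)$, $A(\tau)=\delta+\beta(S^*(\tau))$, $B(\tau)=[2\beta(S^*(\tau))+N^*(\tau)\beta'(S^*(\tau))]e^{-\delta\tau}$; these are continuously differentiable in $\tau$, and $A'$, $B'$ denote their derivatives. *)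

(* real analysis with Stdlib Reals.  Complex numbers are
   represented by their real and imaginary parts. *)
From Stdlib Require Import Reals.
Open Scope R_scope.

Definition sgn (x : R) : R :=
  if Rlt_dec 0 x then 1 else if Rlt_dec x 0 then -1 else 0.

Definition taubar (delta : R) (beta : R -> R) : R :=
  / delta * ln (2 * beta 0 / (delta + beta 0)).

Definition Sstar (delta : R) (binv : R -> R) (tau : R) : R :=
  binv (delta / (2 * exp (- delta * tau) - 1)).

Definition Nstar (delta : R) (binv : R -> R) (tau : R) : R :=
  (2 * exp (- delta * tau) - 1) * exp (delta * tau) * Sstar delta binv tau.

Definition Afun (delta : R) (beta binv : R -> R) (tau : R) : R :=
  delta + beta (Sstar delta binv tau).

(* B(tau) = [2 beta(Sstar) + Nstar beta1(Sstar)] e^{-delta tau};  beta1 = beta' *)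
Definition Bfun (delta : R) (beta beta1 binv : R -> R) (tau : R) : R :=
  (2 * beta (Sstar delta binv tau)
   + Nstar delta binv tau * beta1 (Sstar delta binv tau)) * exp (- delta * tau).

(* Delta(lambda, tau) = lambda + a - b e^{-lambda tau}, lambda = x + i y,
   with a = A(tau), b = B(tau).
   e^{-lambda tau} = e^{-x tau} (cos (y tau) - i sin (y tau)). *)
Definition DeltaRe (a b tau x y : R) : R :=
  x + a - b * exp (- x * tau) * cos (y * tau).
Definition DeltaIm (a b tau x y : R) : R :=
  y + b * exp (- x * tau) * sin (y * tau).

(* d Delta / d lambda = 1 + b tau e^{-lambda tau} (real and imaginary parts) *)
Definition dDeltaRe (b tau x y : R) : R :=
  1 + b * tau * exp (- x * tau) * cos (y * tau).
Definition dDeltaIm (b tau x y : R) : R :=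
  - (b * tau * exp (- x * tau) * sin (y * tau)).

Definition is_root (a b tau x y : R) : Prop :=
  DeltaRe a b tau x y = 0 /\ DeltaIm a b tau x y = 0.

Definition is_simple_root (a b tau x y : R) : Prop :=
  is_root a b tau x y /\
  (dDeltaRe b tau x y <> 0 \/ dDeltaIm b tau x y <> 0).

From Stdlib Require Import Reals Lra Psatz ClassicalEpsilon Ranalysis5.
Open Scope R_scope.

(* At a root
      i omega, b cos (omega tau) = a and b sin (omega tau) = - omega; any non-real
      root is simple.  Writing a root as x + i q / t and eliminating b, the phase q
      solves  phase_gain q = b t e^(a t)  with phase_gain strictly decreasing where
      q > 0 and sin q > 0, so when b < 0 the implicit function theorem continues
      i omega to a C1 branch of roots.  Differentiating the real and imaginary parts
      of Delta along a branch gives a 2x2 linear system for the derivative of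
      lambda; solving it gives the sign of d Re lambda / d tau.
   3. The coefficients of the model: 0 < A and B < A on (0, taubar), which forces
      B < 0 at an imaginary root, and A, B are C1 there (beta^-1 is C1 by the
      inverse function theorem, since beta' < 0). *)

(** * Calculus on the real line *)

Lemma continuity_pt_iff (f : R -> R) (x : R) :
  continuity_pt f x <->
  (forall eps, 0 < eps ->
     exists d, 0 < d /\ forall y, Rabs (y - x) < d -> Rabs (f y - f x) < eps).
Proof.
  unfold continuity_pt, continue_in, limit1_in, limit_in, D_x, no_cond; simpl; unfold Rdist.
  split; intros H eps He; destruct (H eps He) as [d [Hd Hy]]; exists d; split; auto.
  - intros y Hyd; destruct (Req_dec x y) as [<-|Hne].
    + rewrite Rminus_diag, Rabs_R0; lra.
    + apply Hy; auto.
  - intros y [_ Hyd]; auto.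
Qed.

Lemma derivable_pt_lim_continuity (f : R -> R) (x l : R) :
  derivable_pt_lim f x l -> continuity_pt f x.
Proof. intro H; apply derivable_continuous_pt; exists l; exact H. Qed.

Lemma continuity_pt_pos_nbhd (f : R -> R) (x : R) :
  continuity_pt f x -> 0 < f x ->
  exists r, 0 < r /\ forall y, Rabs (y - x) <= r -> 0 < f y.
Proof.
  intros Hc Hfx; destruct (proj1 (continuity_pt_iff f x) Hc (f x) Hfx) as [d [Hd Hy]].
  exists (d / 2); split; [lra|]; intros y Hyx.
  specialize (Hy y ltac:(lra)); apply Rabs_def2 in Hy; lra.
Qed.

Lemma derivative_of_locally_zero (f : R -> R) (x l r : R) :
  0 < r -> (forall t, Rabs (t - x) < r -> f t = 0) ->
  derivable_pt_lim f x l -> l = 0.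
Proof.
  intros Hr Hz Hf; apply (uniqueness_limite (fun _ => 0) x); [|apply derivable_pt_lim_const].
  intros eps He; destruct (Hf eps He) as [d Hd].
  exists (mkposreal _ (Rmin_pos _ _ (cond_pos d) Hr)); simpl; intros h Hh0 Hh.
  assert (Hhd := Rmin_l d r); assert (Hhr := Rmin_r d r).
  specialize (Hd h Hh0 ltac:(lra)).
  rewrite (Hz x), (Hz (x + h)) in Hd; auto.
  - replace (x + h - x) with h by ring; lra.
  - rewrite Rminus_diag, Rabs_R0; lra.
Qed.

Lemma sgn_mul_pos (x m : R) : 0 < m -> sgn (x * m) = sgn x.
Proof.
  intro Hm; unfold sgn.
  destruct (Rlt_dec 0 x), (Rlt_dec 0 (x * m)); try nra;
  destruct (Rlt_dec x 0), (Rlt_dec (x * m) 0); nra.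
Qed.

Definition C1on (f f' : R -> R) (D : R -> Prop) : Prop :=
  forall t, D t -> derivable_pt_lim f t (f' t) /\ continuity_pt f' t.

(* C1on is closed under restriction of the domain and under the usual
   operations, with the derivative given by the usual rules; C1 proofs can thus
   be built with the derivative left to unification. *)
Lemma C1on_weaken (f f' : R -> R) (D D' : R -> Prop) :
  C1on f f' D -> (forall t, D' t -> D t) -> C1on f f' D'.
Proof. intros H S t Ht; apply H, S, Ht. Qed.

Lemma C1on_const (c : R) (D : R -> Prop) : C1on (fun _ => c) (fun _ => 0) D.
Proof.
  intros t _; split; [apply derivable_pt_lim_const|apply continuity_pt_const; now intros ? ?].
Qed.

Lemma C1on_id (D : R -> Prop) : C1on (fun t => t) (fun _ => 1) D.
Proof.
  intros t _; split; [apply derivable_pt_lim_id|apply continuity_pt_const; now intros ? ?].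
Qed.

Lemma C1on_opp (f f' : R -> R) (D : R -> Prop) :
  C1on f f' D -> C1on (fun t => - f t) (fun t => - f' t) D.
Proof.
  intros Hf t Ht; destruct (Hf t Ht) as [Hd Hc]; split.
  - now apply derivable_pt_lim_opp.
  - now apply continuity_pt_opp.
Qed.

Lemma C1on_plus (f f' g g' : R -> R) (D : R -> Prop) :
  C1on f f' D -> C1on g g' D -> C1on (fun t => f t + g t) (fun t => f' t + g' t) D.
Proof.
  intros Hf Hg t Ht; destruct (Hf t Ht), (Hg t Ht); split.
  - now apply derivable_pt_lim_plus.
  - now apply continuity_pt_plus.
Qed.

Lemma C1on_minus (f f' g g' : R -> R) (D : R -> Prop) :
  C1on f f' D -> C1on g g' D -> C1on (fun t => f t - g t) (fun t => f' t - g' t) D.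
Proof.
  intros Hf Hg t Ht; destruct (Hf t Ht), (Hg t Ht); split.
  - now apply derivable_pt_lim_minus.
  - now apply continuity_pt_minus.
Qed.

Lemma C1on_mult (f f' g g' : R -> R) (D : R -> Prop) :
  C1on f f' D -> C1on g g' D ->
  C1on (fun t => f t * g t) (fun t => f' t * g t + f t * g' t) D.
Proof.
  intros Hf Hg t Ht; destruct (Hf t Ht) as [Hfd Hfc], (Hg t Ht) as [Hgd Hgc]; split.
  - now apply derivable_pt_lim_mult.
  - apply derivable_pt_lim_continuity in Hfd, Hgd.
    apply continuity_pt_plus; now apply continuity_pt_mult.
Qed.

Lemma C1on_comp (f f' g g' : R -> R) (D E : R -> Prop) :
  C1on f f' D -> C1on g g' E -> (forall t, D t -> E (f t)) ->
  C1on (fun t => g (f t)) (fun t => g' (f t) * f' t) D.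
Proof.
  intros Hf Hg Hmap t Ht; destruct (Hf t Ht) as [Hfd Hfc], (Hg (f t) (Hmap t Ht)) as [Hgd Hgc].
  split.
  - now apply (derivable_pt_lim_comp f g).
  - apply derivable_pt_lim_continuity in Hfd.
    apply (continuity_pt_mult (fun t => g' (f t))); auto.
    now apply (continuity_pt_comp f g').
Qed.

Lemma C1on_inv (f f' : R -> R) (D : R -> Prop) :
  C1on f f' D -> (forall t, D t -> f t <> 0) ->
  C1on (fun t => / f t) (fun t => - f' t / (f t * f t)) D.
Proof.
  intros Hf Hnz t Ht; destruct (Hf t Ht) as [Hd Hc]; assert (Hft := Hnz t Ht); split.
  - assert (H := derivable_pt_lim_div (fun _ => 1) f t 0 (f' t)
                   (derivable_pt_lim_const 1 t) Hd Hft).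
    unfold div_fct, Rsqr in H.
    replace (- f' t / (f t * f t)) with ((0 * f t - f' t * 1) / (f t * f t)) by (field; auto).
    intros eps He; destruct (H eps He) as [d Hd']; exists d; intros h Hh0 Hh.
    replace (/ f (t + h) - / f t) with (1 / f (t + h) - 1 / f t) by (unfold Rdiv; ring).
    now apply Hd'.
  - apply derivable_pt_lim_continuity in Hd; unfold Rdiv.
    apply (continuity_pt_mult (fun t => - f' t)); [now apply continuity_pt_opp|].
    apply (continuity_pt_inv (fun t => f t * f t)); [now apply continuity_pt_mult|].
    now apply Rmult_integral_contrapositive.
Qed.

Lemma C1on_exp (D : R -> Prop) : C1on exp exp D.
Proof.
  intros t _; split; [apply derivable_pt_lim_exp|].
  apply (derivable_pt_lim_continuity _ _ _ (derivable_pt_lim_exp t)).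
Qed.

Lemma C1on_sin (D : R -> Prop) : C1on sin cos D.
Proof.
  intros t _; split; [apply derivable_pt_lim_sin|].
  apply (derivable_pt_lim_continuity _ _ _ (derivable_pt_lim_cos t)).
Qed.

Lemma C1on_cos (D : R -> Prop) : C1on cos (fun t => - sin t) D.
Proof.
  intros t _; split; [apply derivable_pt_lim_cos|].
  apply continuity_pt_opp, (derivable_pt_lim_continuity _ _ _ (derivable_pt_lim_sin t)).
Qed.

Lemma decreasing_of_negative_derivative (f f' : R -> R) (lb ub : R) :
  (forall x, lb <= x <= ub -> derivable_pt_lim f x (f' x) /\ f' x < 0) ->
  forall x y, lb <= x -> x < y -> y <= ub -> f y < f x.
Proof.
  intros H x y Hx Hxy Hy.
  destruct (MVT_cor2 f f' x y Hxy) as [c [Hc1 Hc2]].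
  - intros c Hc; apply H; lra.
  - assert (f' c < 0) by (apply H; lra); nra.
Qed.

Lemma intermediate_preimage (f : R -> R) (lb ub : R) :
  lb < ub -> (forall x, lb <= x <= ub -> continuity_pt f x) ->
  exists g, forall y, f ub <= y <= f lb -> lb <= g y <= ub /\ f (g y) = y.
Proof.
  intros Hlu Hc.
  exists (fun y => epsilon (inhabits 0) (fun x => lb <= x <= ub /\ f x = y)).
  intros y Hy; apply epsilon_spec.
  destruct (f_interv_is_interv (fun x => - f x) lb ub (- y) Hlu ltac:(lra))
    as [x [Hx1 Hx2]].
  - intros x Hx; exact (continuity_pt_opp f x (Hc x Hx)).
  - exists x; split; auto; lra.
Qed.

Lemma decreasing_inverse_continuous (f g : R -> R) (lb ub y : R) :
  (forall x y, lb <= x -> x < y -> y <= ub -> f y < f x) ->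
  (forall y, f ub <= y <= f lb -> lb <= g y <= ub /\ f (g y) = y) ->
  f ub < y < f lb -> continuity_pt g y.
Proof.
  intros Hdec Hg Hy.
  assert (Hle : forall x y, lb <= x -> x <= y -> y <= ub -> f y <= f x).
  { intros x1 y1 ? ? ?; destruct (Req_dec x1 y1) as [<-|]; [lra|left; apply Hdec; lra]. }
  destruct (Hg y ltac:(lra)) as [[Hg1 Hg2] Hfy].
  assert (Hgy : lb < g y < ub).
  { split; [destruct (Req_dec (g y) lb) as [E|E]|destruct (Req_dec (g y) ub) as [E|E]];
      try (rewrite E in Hfy); lra. }
  apply continuity_pt_iff; intros eps He.
  set (e := Rmin (eps / 2) (Rmin (g y - lb) (ub - g y))).
  assert (He1 : 0 < e) by (unfold e; repeat apply Rmin_pos; lra).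
  assert (He2 := Rmin_l (eps / 2) (Rmin (g y - lb) (ub - g y))).
  assert (He3 := Rmin_l (g y - lb) (ub - g y)); assert (He4 := Rmin_r (g y - lb) (ub - g y)).
  assert (He5 := Rmin_r (eps / 2) (Rmin (g y - lb) (ub - g y))); fold e in He2, He5.
  assert (Hfa : y < f (g y - e)) by (rewrite <- Hfy at 1; apply Hdec; lra).
  assert (Hfb : f (g y + e) < y) by (rewrite <- Hfy at 2; apply Hdec; lra).
  assert (Hub : f ub <= f (g y + e)) by (apply Hle; lra).
  assert (Hlb : f (g y - e) <= f lb) by (apply Hle; lra).
  (* by monotonicity g maps (f (g y + e), f (g y - e)), a neighbourhood of y,
     into (g y - e, g y + e) *)
  exists (Rmin (y - f (g y + e)) (f (g y - e) - y)); split; [apply Rmin_pos; lra|].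
  intros z Hz.
  assert (Hz1 := Rmin_l (y - f (g y + e)) (f (g y - e) - y)).
  assert (Hz2 := Rmin_r (y - f (g y + e)) (f (g y - e) - y)).
  apply Rabs_def2 in Hz; destruct (Hg z ltac:(lra)) as [[Hz5 Hz6] Hfz].
  assert (g y - e < g z).
  { destruct (Rlt_or_le (g y - e) (g z)); auto.
    assert (f (g y - e) <= f (g z)) by (apply Hle; lra); lra. }
  assert (g z < g y + e).
  { destruct (Rlt_or_le (g z) (g y + e)); auto.
    assert (f (g z) <= f (g y + e)) by (apply Hle; lra); lra. }
  apply Rabs_def1; lra.
Qed.

Lemma local_inverse_derivative (f g : R -> R) (y0 d l : R) :
  0 < d -> (forall y, Rabs (y - y0) < d -> f (g y) = y) ->
  continuity_pt g y0 -> derivable_pt_lim f (g y0) l -> l <> 0 ->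
  derivable_pt_lim g y0 (/ l).
Proof.
  intros Hd Hfg Hc Hf Hl eps He.
  assert (Hal : 0 < Rabs l) by (apply Rabs_pos_lt; auto).
  set (eta := Rmin (Rabs l / 2) (eps * Rabs l * Rabs l / 2)).
  assert (Hel : 0 < eps * Rabs l) by nra.
  assert (Heta : 0 < eta) by (unfold eta; apply Rmin_pos; nra).
  assert (Heta1 : eta <= Rabs l / 2) by apply Rmin_l.
  assert (Heta2 : eta <= eps * Rabs l * Rabs l / 2) by apply Rmin_r.
  destruct (Hf eta Heta) as [d1 Hd1].
  destruct (proj1 (continuity_pt_iff g y0) Hc d1 (cond_pos d1)) as [d2 [Hd2 Hg2]].
  exists (mkposreal _ (Rmin_pos _ _ Hd Hd2)); simpl; intros h Hh Hhd.
  assert (Hhd1 := Rmin_l d d2); assert (Hhd2 := Rmin_r d d2).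
  set (k := g (y0 + h) - g y0).
  assert (E1 : f (g (y0 + h)) = y0 + h) by (apply Hfg; replace (y0 + h - y0) with h by ring; lra).
  assert (E0 : f (g y0) = y0) by (apply Hfg; rewrite Rminus_diag, Rabs_R0; lra).
  assert (Hk : k <> 0).
  { intro Hk0; unfold k in Hk0; replace (g (y0 + h)) with (g y0) in E1 by lra; lra. }
  assert (Hkd : Rabs k < d1) by (apply Hg2; replace (y0 + h - y0) with h by ring; lra).
  specialize (Hd1 k Hk Hkd).
  replace (g y0 + k) with (g (y0 + h)) in Hd1 by (unfold k; ring).
  rewrite E1, E0 in Hd1; replace (y0 + h - y0) with h in Hd1 by ring.
  (* with Q = h / k the difference quotient of g is 1 / Q, and |Q - l| < eta *)
  set (Q := h / k) in *.
  assert (HQ : Q <> 0) by (unfold Q; apply Rmult_integral_contrapositive;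
                           split; auto; apply Rinv_neq_0_compat; auto).
  replace (k / h - / l) with ((l - Q) / (Q * l)) by (unfold Q; field; auto).
  unfold Rdiv; rewrite Rabs_mult, Rabs_inv, Rabs_mult.
  assert (Htri : Rabs l <= Rabs Q + Rabs (l - Q)).
  { replace l with (Q + (l - Q)) at 1 by ring; apply Rabs_triang. }
  rewrite <- Rabs_Ropp in Hd1; replace (- (Q - l)) with (l - Q) in Hd1 by ring.
  assert (HaQ : 0 < Rabs Q) by (apply Rabs_pos_lt; auto).
  apply (Rmult_lt_reg_r (Rabs Q * Rabs l)); [nra|].
  rewrite Rmult_assoc, Rinv_l; nra.
Qed.

Lemma decreasing_inverse_C1 (f f' g : R -> R) (lb ub : R) :
  (forall x, lb <= x <= ub ->
     derivable_pt_lim f x (f' x) /\ continuity_pt f' x /\ f' x < 0) ->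
  (forall y, f ub <= y <= f lb -> lb <= g y <= ub /\ f (g y) = y) ->
  C1on g (fun y => / f' (g y)) (fun y => f ub < y < f lb).
Proof.
  intros Hf Hg y Hy.
  assert (Hdec := decreasing_of_negative_derivative f f' lb ub
                    (fun x Hx => let (H1, H2) := Hf x Hx in conj H1 (proj2 H2))).
  assert (Hc : continuity_pt g y) by (apply (decreasing_inverse_continuous f g lb ub); auto).
  destruct (Hg y ltac:(lra)) as [Hgy _]; destruct (Hf (g y) Hgy) as [H1 [H2 H3]].
  split.
  - apply (local_inverse_derivative f g y (Rmin (y - f ub) (f lb - y))); auto; try lra.
    + apply Rmin_pos; lra.
    + intros z Hz; assert (Hz1 := Rmin_l (y - f ub) (f lb - y));
        assert (Hz2 := Rmin_r (y - f ub) (f lb - y)).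
      apply Rabs_def2 in Hz; apply Hg; lra.
  - apply (continuity_pt_inv (fun y => f' (g y))); [now apply (continuity_pt_comp g f')|lra].
Qed.

Lemma decreasing_implicit_branch (g g' c c' : R -> R) (x0 rx t0 r : R) :
  0 < rx -> 0 < r ->
  (forall x, x0 - rx <= x <= x0 + rx ->
     derivable_pt_lim g x (g' x) /\ continuity_pt g' x /\ g' x < 0) ->
  C1on c c' (fun t => Rabs (t - t0) < r) -> g x0 = c t0 ->
  exists eps x x', 0 < eps <= r /\ x t0 = x0 /\
    C1on x x' (fun t => Rabs (t - t0) < eps) /\
    forall t, Rabs (t - t0) < eps -> x0 - rx <= x t <= x0 + rx /\ g (x t) = c t.
Proof.
  intros Hrx Hr Hg Hc Hx0.
  assert (Hdec := decreasing_of_negative_derivative g g' (x0 - rx) (x0 + rx)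
                    (fun x Hx => let (H1, H2) := Hg x Hx in conj H1 (proj2 H2))).
  destruct (intermediate_preimage g (x0 - rx) (x0 + rx)) as [h Hh]; [lra|..].
  { intros x Hx; destruct (Hg x Hx) as [H _]; exact (derivable_pt_lim_continuity _ _ _ H). }
  assert (Hrange : g (x0 + rx) < c t0 < g (x0 - rx)) by (rewrite <- Hx0; split; apply Hdec; lra).
  assert (Hh0 : h (c t0) = x0).
  { destruct (Hh (c t0) ltac:(lra)) as [H1 H2]; rewrite <- Hx0 in *.
    destruct (Rtotal_order (h (g x0)) x0) as [H|[H|H]]; auto.
    - assert (g x0 < g (h (g x0))) by (apply Hdec; lra); lra.
    - assert (g (h (g x0)) < g x0) by (apply Hdec; lra); lra. }
  (* c t stays strictly inside the range of g for t close to t0 *)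
  assert (Hct0 : continuity_pt c t0).
  { assert (Ht0 : Rabs (t0 - t0) < r) by (rewrite Rminus_diag, Rabs_R0; lra).
    destruct (Hc t0 Ht0) as [H _].
    exact (derivable_pt_lim_continuity _ _ _ H). }
  destruct (proj1 (continuity_pt_iff c t0) Hct0 (Rmin (c t0 - g (x0 + rx)) (g (x0 - rx) - c t0)))
    as [d [Hd Hcd]]; [apply Rmin_pos; lra|].
  assert (Hm1 := Rmin_l (c t0 - g (x0 + rx)) (g (x0 - rx) - c t0)).
  assert (Hm2 := Rmin_r (c t0 - g (x0 + rx)) (g (x0 - rx) - c t0)).
  assert (He1 := Rmin_l d r); assert (He2 := Rmin_r d r).
  assert (Hin : forall t, Rabs (t - t0) < Rmin d r -> g (x0 + rx) < c t < g (x0 - rx)).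
  { intros t Ht; specialize (Hcd t ltac:(lra)); apply Rabs_def2 in Hcd; lra. }
  exists (Rmin d r), (fun t => h (c t)), (fun t => / g' (h (c t)) * c' t).
  split; [split; [apply Rmin_pos|]; lra|]; split; [exact Hh0|]; split.
  - apply (C1on_comp c c' h (fun y => / g' (h y)) _ (fun y => g (x0 + rx) < y < g (x0 - rx))).
    + apply (C1on_weaken _ _ _ _ Hc); intros t Ht; lra.
    + exact (decreasing_inverse_C1 g g' h (x0 - rx) (x0 + rx) Hg Hh).
    + exact Hin.
  - intros t Ht; apply Hh; specialize (Hin t Ht); lra.
Qed.

(** * The characteristic equation  lambda + a - b e^(-lambda tau) = 0 *)

Lemma imaginary_root_trig (a b tau y : R) :
  is_root a b tau 0 y -> b * cos (y * tau) = a /\ b * sin (y * tau) = - y.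
Proof.
  unfold is_root, DeltaRe, DeltaIm; replace (- 0 * tau) with 0 by ring; rewrite exp_0; lra.
Qed.

Lemma imaginary_root_modulus (a b tau y : R) :
  is_root a b tau 0 y -> a * a + y * y = b * b.
Proof.
  intro H; destruct (imaginary_root_trig a b tau y H) as [HC HS].
  assert (Hcs := sin2_cos2 (y * tau)); unfold Rsqr in Hcs.
  rewrite <- HC; replace (y * y) with (b * sin (y * tau) * (b * sin (y * tau))) by (rewrite HS; ring).
  transitivity (b * b * (sin (y * tau) * sin (y * tau) + cos (y * tau) * cos (y * tau))); [ring|].
  rewrite Hcs; ring.
Qed.

Lemma imaginary_root_b_neg (a b tau y : R) :
  0 < a -> b < a -> y <> 0 -> is_root a b tau 0 y -> b < 0.
Proof.
  intros Ha Hba Hy H; assert (Hm := imaginary_root_modulus a b tau y H).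
  assert (0 < y * y) by (destruct (Rlt_or_le 0 y); [|assert (y < 0) by lra]; nra).
  nra.
Qed.

(* A root off the real axis is simple: there d Delta / d lambda has imaginary part tau y. *)
Lemma nonreal_root_simple (a b tau x y : R) :
  tau <> 0 -> y <> 0 -> is_root a b tau x y -> is_simple_root a b tau x y.
Proof.
  intros Ht Hy [Hre Him]; split; [split; auto|right].
  unfold DeltaIm in Him; unfold dDeltaIm.
  replace (b * tau * exp (- x * tau) * sin (y * tau))
    with (tau * (b * exp (- x * tau) * sin (y * tau))) by ring.
  replace (b * exp (- x * tau) * sin (y * tau)) with (- y) by lra.
  replace (- (tau * - y)) with (tau * y) by ring.
  now apply Rmult_integral_contrapositive.
Qed.

(* For a root x + i y at delay t with phase
   q = y t, the imaginary part of the equation gives b t e^(-x t) = - q / sin q;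
   the real part then gives x t = phase_re q - a t with phase_re q = - q cot q, and
   the root condition becomes  phase_gain q = b t e^(a t). *)
Definition phase_re (q : R) : R := - q * cos q / sin q.
Definition phase_gain (q : R) : R := - q * exp (phase_re q) / sin q.

Lemma root_of_phase (a b t q : R) :
  0 < t -> sin q <> 0 -> phase_gain q = b * t * exp (a * t) ->
  is_root a b t (phase_re q / t - a) (q / t).
Proof.
  intros Ht Hs Hg.
  assert (Hea : exp (a * t) <> 0) by apply Rgt_not_eq, exp_pos.
  assert (Hep : exp (phase_re q) <> 0) by apply Rgt_not_eq, exp_pos.
  assert (Eexp : exp (- (phase_re q / t - a) * t) = / exp (phase_re q) * exp (a * t)).
  { rewrite <- exp_Ropp, <- exp_plus; f_equal; field; lra. }
  assert (Hb : b = phase_gain q / (t * exp (a * t))) by (rewrite Hg; field; split; lra).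
  unfold is_root, DeltaRe, DeltaIm.
  replace (q / t * t) with q by (field; lra).
  rewrite Eexp, Hb; unfold phase_gain, phase_re; split; field; repeat split; auto; lra.
Qed.

Lemma phase_of_imaginary_root (a b tau y : R) :
  y <> 0 -> is_root a b tau 0 y ->
  sin (y * tau) <> 0 /\ phase_re (y * tau) = a * tau /\
  phase_gain (y * tau) = b * tau * exp (a * tau).
Proof.
  intros Hy H; destruct (imaginary_root_trig a b tau y H) as [HC HS].
  assert (Hb : b <> 0) by (intro E; rewrite E in HS; lra).
  assert (Hcos : cos (y * tau) = a / b) by (rewrite <- HC; field; auto).
  assert (Hsin : sin (y * tau) = - y / b) by (rewrite <- HS; field; auto).
  assert (Hre : phase_re (y * tau) = a * tau)
    by (unfold phase_re; rewrite Hcos, Hsin; field; auto).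
  split; [intro E; rewrite E in HS; lra|split; [exact Hre|]].
  unfold phase_gain; rewrite Hre, Hsin; field; auto.
Qed.

Lemma phase_re_C1 : exists p', C1on phase_re p' (fun q => sin q <> 0).
Proof.
  eexists; unfold phase_re, Rdiv.
  apply C1on_mult; [apply C1on_mult; [apply C1on_opp, C1on_id|apply C1on_cos]|].
  apply C1on_inv; [apply C1on_sin|auto].
Qed.

(* phase_gain is C1 where sin q <> 0, and strictly decreasing on 0 < q, sin q > 0:
   there its derivative is - e^(phase_re q) ((sin q - q cos q)^2 + (q sin q)^2) / sin q^3. *)
Lemma phase_gain_decreasing :
  exists g', C1on phase_gain g' (fun q => sin q <> 0) /\
             forall q, 0 < q -> 0 < sin q -> g' q < 0.
Proof.
  eexists; split.
  - unfold phase_gain, phase_re, Rdiv.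
    apply C1on_mult; [apply C1on_mult; [apply C1on_opp, C1on_id|]|].
    + eapply (C1on_comp (fun q => - q * cos q * / sin q) _ exp exp _ (fun _ => True));
        [|apply C1on_exp|auto].
      apply C1on_mult; [apply C1on_mult; [apply C1on_opp, C1on_id|apply C1on_cos]|].
      apply C1on_inv; [apply C1on_sin|auto].
    + apply C1on_inv; [apply C1on_sin|auto].
  - intros q Hq Hs; cbv beta.
    set (E := exp (- q * cos q * / sin q)).
    assert (HE : 0 < E) by apply exp_pos.
    assert (HN : 0 < (sin q - q * cos q) ^ 2 + (q * sin q) ^ 2)
      by (assert (0 < (q * sin q) ^ 2) by (apply pow_lt, Rmult_lt_0_compat; lra);
          assert (0 <= (sin q - q * cos q) ^ 2) by apply pow2_ge_0; lra).
    match goal with |- ?e < 0 =>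
      replace e with (- (E * ((sin q - q * cos q) ^ 2 + (q * sin q) ^ 2) / sin q ^ 3))
        by (field; lra) end.
    assert (0 < sin q ^ 3) by (apply pow_lt; lra).
    enough (0 < E * ((sin q - q * cos q) ^ 2 + (q * sin q) ^ 2) / sin q ^ 3) by lra.
    apply Rdiv_lt_0_compat; [apply Rmult_lt_0_compat|]; lra.
Qed.

Lemma imaginary_root_phase_branch (A B A' B' : R -> R) (tc r omega : R) :
  0 < r -> 0 < omega -> 0 < tc ->
  C1on A A' (fun t => Rabs (t - tc) < r) -> C1on B B' (fun t => Rabs (t - tc) < r) ->
  B tc < 0 -> is_root (A tc) (B tc) tc 0 omega ->
  exists eps q q', 0 < eps <= r /\ q tc = omega * tc /\
    C1on q q' (fun t => Rabs (t - tc) < eps) /\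
    forall t, Rabs (t - tc) < eps ->
      sin (q t) <> 0 /\ phase_gain (q t) = B t * t * exp (A t * t).
Proof.
  intros Hr Hom Htc HA HB Hb Hroot.
  destruct (imaginary_root_trig _ _ _ _ Hroot) as [_ HS].
  destruct (phase_of_imaginary_root _ _ _ _ (Rgt_not_eq _ _ Hom) Hroot) as [_ [_ Hg0]].
  set (q0 := omega * tc) in *.
  assert (Hq0 : 0 < q0) by (apply Rmult_lt_0_compat; lra).
  assert (Hs0 : 0 < sin q0) by nra.
  (* on [q0 - rx, q0 + rx] both q and sin q stay positive *)
  destruct (continuity_pt_pos_nbhd sin q0 (continuity_sin q0) Hs0) as [rs [Hrs Hsn]].
  set (rx := Rmin rs (q0 / 2)).
  assert (Hrx1 := Rmin_l rs (q0 / 2)); assert (Hrx2 := Rmin_r rs (q0 / 2)); fold rx in Hrx1, Hrx2.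
  assert (Hpos : forall x, q0 - rx <= x <= q0 + rx -> 0 < x /\ 0 < sin x).
  { intros x Hx; split; [lra|apply Hsn, Rabs_le; lra]. }
  destruct phase_gain_decreasing as [g' [Hg' Hneg]].
  assert (Hc : exists c', C1on (fun t => B t * t * exp (A t * t)) c'
                                (fun t => Rabs (t - tc) < r)).
  { eexists; apply C1on_mult; [apply C1on_mult; [exact HB|apply C1on_id]|].
    eapply (C1on_comp (fun t => A t * t) _ exp exp _ (fun _ => True)); [|apply C1on_exp|auto].
    apply C1on_mult; [exact HA|apply C1on_id]. }
  destruct Hc as [c' Hc].
  destruct (decreasing_implicit_branch phase_gain g' (fun t => B t * t * exp (A t * t))
              c' q0 rx tc r) as [eps [q [q' [Heps [Hqc [Hq Hsol]]]]]]; auto.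
  - apply Rmin_pos; lra.
  - intros x Hx; destruct (Hpos x Hx) as [Hx1 Hx2].
    destruct (Hg' x ltac:(lra)) as [Hd Hc']; auto.
  - exists eps, q, q'; split; [exact Heps|split; [exact Hqc|split; [exact Hq|]]].
    intros t Ht; destruct (Hsol t Ht) as [Hin Heq]; destruct (Hpos _ Hin).
    split; [lra|exact Heq].
Qed.

Lemma imaginary_root_branch (A B A' B' : R -> R) (tc r omega : R) :
  0 < r <= tc -> 0 < omega ->
  C1on A A' (fun t => Rabs (t - tc) < r) -> C1on B B' (fun t => Rabs (t - tc) < r) ->
  B tc < 0 -> is_root (A tc) (B tc) tc 0 omega ->
  exists eps lr li lr' li', 0 < eps /\ lr tc = 0 /\ li tc = omega /\
    (forall t, Rabs (t - tc) < eps ->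
       is_root (A t) (B t) t (lr t) (li t) /\
       derivable_pt_lim lr t (lr' t) /\ derivable_pt_lim li t (li' t) /\
       continuity_pt lr' t /\ continuity_pt li' t).
Proof.
  intros Hr Hom HA HB Hb Hroot.
  destruct (phase_of_imaginary_root _ _ _ _ (Rgt_not_eq _ _ Hom) Hroot) as [_ [Hre0 _]].
  destruct (imaginary_root_phase_branch A B A' B' tc r omega) as [eps [q [q' [Heps [Hqc [Hq Hsol]]]]]];
    auto; try lra.
  set (D := fun t => Rabs (t - tc) < eps).
  assert (HD : forall t, D t -> 0 < t) by (intros t Ht; unfold D in Ht; apply Rabs_def2 in Ht; lra).
  assert (Hinvt : C1on (fun t => / t) (fun t => - 1 / (t * t)) D).
  { apply (C1on_inv (fun t => t) (fun _ => 1)); [apply C1on_id|intros t Ht; specialize (HD t Ht); lra]. }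
  destruct phase_re_C1 as [p' Hp].
  assert (Hlr : exists lr', C1on (fun t => phase_re (q t) / t - A t) lr' D).
  { eexists; unfold Rdiv; apply C1on_minus.
    - apply C1on_mult; [|exact Hinvt].
      eapply C1on_comp; [exact Hq|exact Hp|intros t Ht; apply Hsol, Ht].
    - apply (C1on_weaken _ _ _ _ HA); unfold D; intros t Ht; lra. }
  assert (Hli : exists li', C1on (fun t => q t / t) li' D).
  { eexists; unfold Rdiv; apply C1on_mult; [exact Hq|exact Hinvt]. }
  destruct Hlr as [lr' Hlr]; destruct Hli as [li' Hli].
  exists eps, (fun t => phase_re (q t) / t - A t), (fun t => q t / t), lr', li'.
  split; [lra|split; [|split]]; cbv beta.
  - rewrite Hqc, Hre0; field; lra.
  - rewrite Hqc; field; lra.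
  - intros t Ht; destruct (Hlr t Ht), (Hli t Ht), (Hsol t Ht).
    repeat split; auto; apply root_of_phase; auto.
Qed.

(* Rewriting the value of a derivative, so that it can first be computed as an evar. *)
Lemma derivable_pt_lim_eq_value (f : R -> R) (x l l' : R) :
  derivable_pt_lim f x l -> l = l' -> derivable_pt_lim f x l'.
Proof. now intros H <-. Qed.

Lemma root_branch_linearization (A B lr li : R -> R) (tc omega eps Ad Bd dr di : R) :
  0 < eps -> lr tc = 0 -> li tc = omega ->
  (forall t, Rabs (t - tc) < eps -> is_root (A t) (B t) t (lr t) (li t)) ->
  derivable_pt_lim A tc Ad -> derivable_pt_lim B tc Bd ->
  derivable_pt_lim lr tc dr -> derivable_pt_lim li tc di ->
  let C := cos (omega * tc) in let S := sin (omega * tc) in let b := B tc in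
  dr + Ad - Bd * C + b * C * dr * tc + b * S * (di * tc + omega) = 0 /\
  di + Bd * S - b * S * dr * tc + b * C * (di * tc + omega) = 0.
Proof.
  intros Heps Hlr Hli Hroot HA HB Hdr Hdi C S b.
  assert (Hexp : derivable_pt_lim (fun t => exp (- lr t * t)) tc (- dr * tc)).
  { eapply derivable_pt_lim_eq_value.
    - apply (derivable_pt_lim_comp (fun t => - lr t * t) exp);
        [apply derivable_pt_lim_mult; [apply derivable_pt_lim_opp, Hdr|apply derivable_pt_lim_id]
        |apply derivable_pt_lim_exp].
    - unfold opp_fct; rewrite Hlr; replace (- 0 * tc) with 0 by ring; rewrite exp_0; ring. }
  assert (Hphase : derivable_pt_lim (fun t => li t * t) tc (di * tc + omega)).
  { eapply derivable_pt_lim_eq_value;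
      [apply derivable_pt_lim_mult; [exact Hdi|apply derivable_pt_lim_id]|rewrite Hli; ring]. }
  assert (He0 : exp (- lr tc * tc) = 1) by (rewrite Hlr; replace (- 0 * tc) with 0 by ring; apply exp_0).
  split.
  - eassert (D : derivable_pt_lim (fun t => DeltaRe (A t) (B t) t (lr t) (li t)) tc _).
    { unfold DeltaRe; apply derivable_pt_lim_minus; [apply derivable_pt_lim_plus; eauto|].
      apply derivable_pt_lim_mult; [apply derivable_pt_lim_mult; eauto|].
      apply (derivable_pt_lim_comp (fun t => li t * t) cos); [exact Hphase|apply derivable_pt_lim_cos]. }
    apply (derivative_of_locally_zero _ _ _ eps Heps (fun t Ht => proj1 (Hroot t Ht))) in D.
    cbv beta in D; rewrite He0, Hli in D; fold C S b in D; lra.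
  - eassert (D : derivable_pt_lim (fun t => DeltaIm (A t) (B t) t (lr t) (li t)) tc _).
    { unfold DeltaIm; apply derivable_pt_lim_plus; [eauto|].
      apply derivable_pt_lim_mult; [apply derivable_pt_lim_mult; eauto|].
      apply (derivable_pt_lim_comp (fun t => li t * t) sin); [exact Hphase|apply derivable_pt_lim_sin]. }
    apply (derivative_of_locally_zero _ _ _ eps Heps (fun t Ht => proj2 (Hroot t Ht))) in D.
    cbv beta in D; rewrite He0, Hli in D; fold C S b in D; lra.
Qed.

(* Solving the linearized system: with K = (1 + a tc)^2 + (omega tc)^2 > 0, the
   quantity of the crossing formula equals (- b) K dr, so it has the sign of dr. *)
Lemma crossing_sign_algebra (a b tc omega C S Ad Bd dr di : R) :
  0 < tc -> 0 < omega -> b < 0 ->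
  b * C = a -> b * S = - omega -> a * a + omega * omega = b * b ->
  dr + Ad - Bd * C + b * C * dr * tc + b * S * (di * tc + omega) = 0 ->
  di + Bd * S - b * S * dr * tc + b * C * (di * tc + omega) = 0 ->
  sgn dr = sgn (- b ^ 3 - b ^ 2 * Bd * tc + b * (a ^ 2 + Ad + a * Ad * tc) - Bd * a).
Proof.
  intros Htc Hom Hb HC HS Hmod E1 E2.
  assert (E1' : dr * (1 + a * tc) - omega * tc * di = omega * omega + Bd * C - Ad).
  { rewrite HC, HS in E1; lra. }
  assert (E2' : omega * tc * dr + (1 + a * tc) * di = - (Bd * S) - a * omega).
  { rewrite HC, HS in E2; lra. }
  set (K := (1 + a * tc) ^ 2 + (omega * tc) ^ 2).
  assert (HK : 0 < K).
  { assert (0 < (omega * tc) ^ 2) by (apply pow_lt, Rmult_lt_0_compat; lra).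
    assert (0 <= (1 + a * tc) ^ 2) by apply pow2_ge_0; unfold K; lra. }
  assert (HdK : dr * K = (1 + a * tc) * (omega * omega + Bd * C - Ad)
                         + omega * tc * (- (Bd * S) - a * omega)).
  { rewrite <- E1', <- E2'; unfold K; ring. }
  rewrite <- (sgn_mul_pos dr (K * - b)) by (apply Rmult_lt_0_compat; lra); f_equal.
  replace (dr * (K * - b)) with (- b * (dr * K)) by ring; rewrite HdK.
  replace C with (a / b) by (rewrite <- HC; field; lra).
  replace (omega * tc * (- (Bd * S) - a * omega))
    with (- tc * (Bd * (omega * S) + a * (omega * omega))) by ring.
  replace (omega * S) with (- (omega * omega) / b)
    by (replace S with (- omega / b) by (rewrite <- HS; field; lra); field; lra).
  replace (omega * omega) with (b * b - a * a) by lra.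
  field; lra.
Qed.

Lemma crossing_direction (A B lr li : R -> R) (tc omega eps Ad Bd dr di : R) :
  0 < tc -> 0 < omega -> B tc < 0 -> 0 < eps -> lr tc = 0 -> li tc = omega ->
  (forall t, Rabs (t - tc) < eps -> is_root (A t) (B t) t (lr t) (li t)) ->
  derivable_pt_lim A tc Ad -> derivable_pt_lim B tc Bd ->
  derivable_pt_lim lr tc dr -> derivable_pt_lim li tc di ->
  sgn dr = sgn (- B tc ^ 3 - B tc ^ 2 * Bd * tc
                + B tc * (A tc ^ 2 + Ad + A tc * Ad * tc) - Bd * A tc).
Proof.
  intros Htc Hom Hb Heps Hlr Hli Hroot HA HB Hdr Hdi.
  assert (Hroot0 : is_root (A tc) (B tc) tc 0 omega).
  { rewrite <- Hlr, <- Hli; apply Hroot; rewrite Rminus_diag, Rabs_R0; lra. }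
  destruct (imaginary_root_trig _ _ _ _ Hroot0) as [HC HS].
  destruct (root_branch_linearization A B lr li tc omega eps Ad Bd dr di) as [E1 E2]; auto.
  apply (crossing_sign_algebra (A tc) (B tc) tc omega (cos (omega * tc)) (sin (omega * tc))
           Ad Bd dr di); auto.
  exact (imaginary_root_modulus _ _ _ _ Hroot0).
Qed.

(** * The coefficients A and B of the model *)

Section ModelCoefficients.

Variables (delta : R) (beta beta1 beta2 binv : R -> R).
Hypothesis Hb1 : forall s, derivable_pt_lim beta s (beta1 s).
Hypothesis Hb2 : forall s, derivable_pt_lim beta1 s (beta2 s).
Hypothesis Hb2c : forall s, continuity_pt beta2 s.
Hypothesis Hpos : forall s, 0 <= s -> 0 < beta s.
Hypothesis Hdec : forall s t, 0 <= s -> s < t -> beta t < beta s.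
Hypothesis Hder : forall s, 0 < s -> beta1 s < 0.
Hypothesis Hdelta : 0 < delta.
Hypothesis Hdb : delta < beta 0.
Hypothesis Hinv : forall y, 0 < y <= beta 0 -> 0 <= binv y /\ beta (binv y) = y.

Lemma delay_factor_bound (t : R) : t < taubar delta beta -> 1 + delta / beta 0 < 2 * exp (- delta * t).
Proof.
  intro Ht; unfold taubar in Ht.
  assert (Hq : 0 < 2 * beta 0 / (delta + beta 0)) by (apply Rdiv_lt_0_compat; lra).
  assert (He : exp (delta * t) * (delta + beta 0) < 2 * beta 0).
  { apply (Rmult_lt_compat_l delta) in Ht; [|lra].
    replace (delta * (/ delta * ln (2 * beta 0 / (delta + beta 0))))
      with (ln (2 * beta 0 / (delta + beta 0))) in Ht by (field; lra).
    apply exp_increasing in Ht; rewrite exp_ln in Ht by exact Hq.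
    apply (Rmult_lt_compat_r (delta + beta 0)) in Ht; [|lra].
    replace (2 * beta 0 / (delta + beta 0) * (delta + beta 0)) with (2 * beta 0) in Ht
      by (field; lra); exact Ht. }
  assert (HE := exp_pos (delta * t)).
  replace (- delta * t) with (- (delta * t)) by ring; rewrite exp_Ropp.
  apply (Rmult_lt_reg_r (exp (delta * t) * beta 0)); [nra|].
  replace ((1 + delta / beta 0) * (exp (delta * t) * beta 0))
    with (exp (delta * t) * (delta + beta 0)) by (field; lra).
  replace (2 * / exp (delta * t) * (exp (delta * t) * beta 0)) with (2 * beta 0) by (field; lra).
  exact He.
Qed.

(* The equilibrium value beta (Sstar tau) = delta / (2 e^(-delta tau) - 1). *)
Definition beta_star (t : R) : R := delta / (2 * exp (- delta * t) - 1).

Lemma beta_star_range (t : R) : t < taubar delta beta -> 0 < beta_star t < beta 0.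
Proof.
  intro Ht; assert (H := delay_factor_bound t Ht).
  assert (0 < delta / beta 0) by (apply Rdiv_lt_0_compat; lra).
  unfold beta_star; split; [apply Rdiv_lt_0_compat; lra|].
  apply (Rmult_lt_reg_r (2 * exp (- delta * t) - 1)); [lra|].
  replace (delta / (2 * exp (- delta * t) - 1) * (2 * exp (- delta * t) - 1)) with delta
    by (field; lra).
  replace delta with (beta 0 * (delta / beta 0)) at 1 by (field; lra).
  apply Rmult_lt_compat_l; lra.
Qed.

Lemma Sstar_spec (t : R) :
  t < taubar delta beta -> 0 < Sstar delta binv t /\ beta (Sstar delta binv t) = beta_star t.
Proof.
  intro Ht; destruct (beta_star_range t Ht) as [H1 H2].
  destruct (Hinv (beta_star t) (conj H1 (Rlt_le _ _ H2))) as [Hs Hbs].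
  change (binv (beta_star t)) with (Sstar delta binv t) in Hs, Hbs.
  split; [destruct Hs as [Hs|Hs]; [exact Hs|rewrite <- Hs in Hbs; lra]|exact Hbs].
Qed.

(* 0 < A tau and B tau < A tau: indeed, with s = Sstar tau,
   B - A = (2 e^(-delta tau) - 1) s beta'(s) < 0. *)
Lemma model_coefficients_order (t : R) :
  t < taubar delta beta -> 0 < Afun delta beta binv t /\
  Bfun delta beta beta1 binv t < Afun delta beta binv t.
Proof.
  intro Ht; destruct (Sstar_spec t Ht) as [Hs Hbs]; destruct (beta_star_range t Ht) as [Hy _].
  assert (HX := delay_factor_bound t Ht).
  assert (0 < delta / beta 0) by (apply Rdiv_lt_0_compat; lra).
  unfold Bfun, Afun, Nstar; rewrite Hbs; set (s := Sstar delta binv t) in *.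
  set (X := exp (- delta * t)) in *.
  assert (HXe : exp (delta * t) * X = 1)
    by (unfold X; rewrite <- exp_plus; replace (delta * t + - delta * t) with 0 by ring; apply exp_0).
  assert (HyX : beta_star t * (2 * X - 1) = delta) by (unfold beta_star; fold X; field; lra).
  assert (Hneg : 0 < (2 * X - 1) * s * - beta1 s)
    by (apply Rmult_lt_0_compat; [apply Rmult_lt_0_compat|assert (beta1 s < 0) by auto]; lra).
  split; [lra|].
  replace ((2 * beta_star t + (2 * X - 1) * exp (delta * t) * s * beta1 s) * X)
    with (2 * beta_star t * X + (2 * X - 1) * (exp (delta * t) * X) * s * beta1 s) by ring.
  rewrite HXe; lra.
Qed.

Lemma binv_C1 (lb ub : R) :
  0 < lb < ub -> C1on binv (fun y => / beta1 (binv y)) (fun y => beta ub < y < beta lb).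
Proof.
  intro Hlu; apply (decreasing_inverse_C1 beta beta1 binv lb ub).
  - intros x Hx; split; [apply Hb1|split].
    + exact (derivable_pt_lim_continuity _ _ _ (Hb2 x)).
    + apply Hder; lra.
  - intros y Hy.
    assert (Hbub : 0 < beta ub) by (apply Hpos; lra).
    assert (Hblb : beta lb < beta 0) by (apply Hdec; lra).
    destruct (Hinv y ltac:(lra)) as [H1 H2]; split; [split|exact H2].
    + destruct (Rlt_or_le (binv y) lb) as [H|H]; auto.
      assert (beta lb < beta (binv y)) by (apply Hdec; auto); lra.
    + destruct (Rlt_or_le ub (binv y)) as [H|H]; auto.
      assert (beta (binv y) < beta ub) by (apply Hdec; auto; lra); lra.
Qed.

(* beta_star is C1 on tau < taubar, where 2 e^(-delta tau) - 1 > 0. *)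
Lemma beta_star_C1 : exists y', C1on beta_star y' (fun t => t < taubar delta beta).
Proof.
  eexists; unfold beta_star, Rdiv.
  apply C1on_mult; [apply C1on_const|].
  apply C1on_inv.
  - apply C1on_minus; [|apply C1on_const]; apply C1on_mult; [apply C1on_const|].
    eapply (C1on_comp (fun t => - delta * t) _ exp exp _ (fun _ => True)); [|apply C1on_exp|auto].
    apply C1on_mult; [apply C1on_const|apply C1on_id].
  - intros t Ht; assert (H := delay_factor_bound t Ht).
    assert (0 < delta / beta 0) by (apply Rdiv_lt_0_compat; lra); lra.
Qed.

(* Near any tc in (0, taubar), Sstar = binv o beta_star is C1: beta_star stays in
   a range (beta (2 s0), beta (s0 / 2)) around beta s0, s0 = Sstar tc, where binv is C1. *)
Lemma Sstar_C1_near (tc : R) :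
  0 < tc < taubar delta beta ->
  exists r S', 0 < r <= tc /\ C1on (Sstar delta binv) S' (fun t => Rabs (t - tc) < r).
Proof.
  intro Htc; destruct (Sstar_spec tc (proj2 Htc)) as [Hs0 Hbs0].
  set (s0 := Sstar delta binv tc) in *.
  assert (Hub : beta (2 * s0) < beta_star tc) by (rewrite <- Hbs0; apply Hdec; lra).
  assert (Hlb : beta_star tc < beta (s0 / 2)) by (rewrite <- Hbs0; apply Hdec; lra).
  destruct beta_star_C1 as [y' Hy].
  assert (Hyc : continuity_pt beta_star tc).
  { destruct (Hy tc (proj2 Htc)) as [H _]; exact (derivable_pt_lim_continuity _ _ _ H). }
  set (e := Rmin (beta_star tc - beta (2 * s0)) (beta (s0 / 2) - beta_star tc)).
  assert (He1 := Rmin_l (beta_star tc - beta (2 * s0)) (beta (s0 / 2) - beta_star tc)).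
  assert (He2 := Rmin_r (beta_star tc - beta (2 * s0)) (beta (s0 / 2) - beta_star tc)).
  destruct (proj1 (continuity_pt_iff _ _) Hyc e) as [d [Hd Hyd]]; [apply Rmin_pos; lra|].
  set (r := Rmin d (Rmin tc (taubar delta beta - tc))).
  assert (Hr1 := Rmin_l d (Rmin tc (taubar delta beta - tc))); fold r in Hr1.
  assert (Hr2 := Rmin_r d (Rmin tc (taubar delta beta - tc))); fold r in Hr2.
  assert (Hr3 := Rmin_l tc (taubar delta beta - tc)).
  assert (Hr4 := Rmin_r tc (taubar delta beta - tc)).
  assert (Hball : forall t, Rabs (t - tc) < r ->
            t < taubar delta beta /\ beta (2 * s0) < beta_star t < beta (s0 / 2)).
  { intros t Ht; specialize (Hyd t ltac:(lra)); fold e in He1, He2.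
    apply Rabs_def2 in Hyd; apply Rabs_def2 in Ht; lra. }
  exists r, (fun t => / beta1 (binv (beta_star t)) * y' t).
  split; [split; [repeat apply Rmin_pos|]; lra|].
  apply (C1on_comp beta_star y' binv (fun y => / beta1 (binv y)) _
           (fun y => beta (2 * s0) < y < beta (s0 / 2))).
  - apply (C1on_weaken _ _ _ _ Hy); intros t Ht; apply Hball, Ht.
  - apply binv_C1; lra.
  - intros t Ht; apply Hball, Ht.
Qed.

Lemma model_coefficients_C1 (tc : R) :
  0 < tc < taubar delta beta ->
  exists r A' B', 0 < r <= tc /\
    C1on (Afun delta beta binv) A' (fun t => Rabs (t - tc) < r) /\
    C1on (Bfun delta beta beta1 binv) B' (fun t => Rabs (t - tc) < r).
Proof.
  intro Htc; destruct (Sstar_C1_near tc Htc) as [r [S' [Hr HS]]].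
  set (D := fun t => Rabs (t - tc) < r) in HS.
  assert (Hbeta : C1on beta beta1 (fun _ => True)).
  { intros s _; split; [apply Hb1|exact (derivable_pt_lim_continuity _ _ _ (Hb2 s))]. }
  assert (Hbeta1 : C1on beta1 beta2 (fun _ => True)) by (intros s _; split; auto).
  assert (Hexp : forall c, exists e', C1on (fun t => exp (c * t)) e' D).
  { intro c; eexists; eapply (C1on_comp (fun t => c * t) _ exp exp _ (fun _ => True));
      [|apply C1on_exp|auto].
    apply C1on_mult; [apply C1on_const|apply C1on_id]. }
  destruct (Hexp (- delta)) as [em Hem]; destruct (Hexp delta) as [ep Hep].
  exists r; do 2 eexists; split; [exact Hr|split].
  - unfold Afun; apply C1on_plus; [apply C1on_const|].
    eapply C1on_comp; [exact HS|exact Hbeta|now intros].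
  - unfold Bfun, Nstar; apply C1on_mult; [apply C1on_plus|exact Hem].
    + apply C1on_mult; [apply C1on_const|eapply C1on_comp; [exact HS|exact Hbeta|now intros]].
    + apply C1on_mult; [|eapply C1on_comp; [exact HS|exact Hbeta1|now intros]].
      apply C1on_mult; [|exact HS]; apply C1on_mult; [|exact Hep].
      apply C1on_minus; [apply C1on_mult; [apply C1on_const|exact Hem]|apply C1on_const].
Qed.

End ModelCoefficients.

Theorem proposition5p1
  (delta : R) (beta beta1 beta2 binv : R -> R)
  (* beta is C^2 (beta1 = beta', beta2 = beta'') *)
  (Hb1 : forall s, derivable_pt_lim beta s (beta1 s))
  (Hb2 : forall s, derivable_pt_lim beta1 s (beta2 s))
  (Hb2c : forall s, continuity_pt beta2 s)
  (Hpos : forall s, 0 <= s -> 0 < beta s)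
  (Hdec : forall s t, 0 <= s -> s < t -> beta t < beta s)
  (Hder : forall s, 0 < s -> beta1 s < 0)
  (Hlim : forall eps, 0 < eps -> exists M, forall S, M < S -> Rabs (beta S) < eps)
  (Hdelta : 0 < delta) (Hdb : delta < beta 0)
  (* binv is the inverse of beta on (0, beta 0] *)
  (Hinv : forall y, 0 < y <= beta 0 -> 0 <= binv y /\ beta (binv y) = y)
  (tau_c omega Ad Bd : R)
  (Htau : 0 < tau_c < taubar delta beta)
  (HAd : derivable_pt_lim (Afun delta beta binv) tau_c Ad)
  (HBd : derivable_pt_lim (Bfun delta beta beta1 binv) tau_c Bd)
  (Homega : 0 < omega)
  (Hroot_p : is_root (Afun delta beta binv tau_c)
                     (Bfun delta beta beta1 binv tau_c) tau_c 0 omega)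
  (Hroot_m : is_root (Afun delta beta binv tau_c)
                     (Bfun delta beta beta1 binv tau_c) tau_c 0 (- omega)) :
  let A := Afun delta beta binv in
  let B := Bfun delta beta beta1 binv in
  let a := A tau_c in
  let b := B tau_c in
  (* +- i omega are simple roots *)
  is_simple_root a b tau_c 0 omega /\
  is_simple_root a b tau_c 0 (- omega) /\
  (* there is a C^1 branch of roots lambda(tau) = lr tau + i li tau through i omega *)
  (exists eps lr li lr' li', 0 < eps /\
     lr tau_c = 0 /\ li tau_c = omega /\
     (forall t, Rabs (t - tau_c) < eps ->
        is_root (A t) (B t) t (lr t) (li t) /\
        derivable_pt_lim lr t (lr' t) /\ derivable_pt_lim li t (li' t) /\
        continuity_pt lr' t /\ continuity_pt li' t)) /\
  (* for any branch of roots through i omega differentiable at tau_c,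
     the sign of d Re lambda / d tau at tau_c is the given one *)
  (forall eps lr li dr di, 0 < eps ->
     lr tau_c = 0 -> li tau_c = omega ->
     (forall t, Rabs (t - tau_c) < eps -> is_root (A t) (B t) t (lr t) (li t)) ->
     derivable_pt_lim lr tau_c dr -> derivable_pt_lim li tau_c di ->
     sgn dr = sgn (- b ^ 3 - b ^ 2 * Bd * tau_c
                   + b * (a ^ 2 + Ad + a * Ad * tau_c) - Bd * a)).
Proof.
  intros A B a b.
  destruct (model_coefficients_order delta beta beta1 binv Hder Hdelta Hdb Hinv tau_c
              (proj2 Htau)) as [Ha Hba].
  assert (Hb : b < 0) by (apply (imaginary_root_b_neg a b tau_c omega); auto; lra).
  destruct (model_coefficients_C1 delta beta beta1 beta2 binv Hb1 Hb2 Hb2c Hpos Hdec Hder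
              Hdelta Hdb Hinv tau_c Htau) as [r [A' [B' [Hr [HA HB]]]]].
  split; [|split; [|split]].
  - apply nonreal_root_simple; auto; lra.
  - apply nonreal_root_simple; auto; lra.
  - exact (imaginary_root_branch A B A' B' tau_c r omega Hr Homega HA HB Hb Hroot_p).
  - intros eps lr li dr di Heps Hlr Hli Hroots Hdr Hdi.
    exact (crossing_direction A B lr li tau_c omega eps Ad Bd dr di (proj1 Htau) Homega Hb
             Heps Hlr Hli Hroots HAd HBd Hdr Hdi).
Qed.
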